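(* Let $\mathcal{M}_\|$ be a two-dimensional timelike plane through the origin in $\mathbb{R}^{1+s}$ and $\mathcal{M}_\perp$ its Minkowski-orthogonal complement. Let $a_\pm\in\mathbb{R}^{1+s}$ satisfy $(a_+-a_-)_\|\in V_+$, where $y_\|$ denotes the component of $y$ in $\mathcal{M}_\|$ under the decomposition $\mathbb{R}^{1+s}=\mathcal{M}_\|\oplus\mathcal{M}_\perp$. Then the set $G:=\big((a_++\overline{V}_+)\cup(a_-+\overline{V}_-)\big)+\mathcal{M}_\perp$ has property $\mathbf{lts}(\mathcal{M}_\|)$.
   Context: $\mathbb{R}^{1+s}$ is Minkowski space with metric $xy=x_0y_0-\vec x\cdot\vec y$; $V_\pm$ open forward/backward light cones, $\overline{V}_\pm$ their closures. For a two-dimensional timelike plane $\mathcal{M}_\|$ through the origin, a set $G\subset\mathbb{R}^{1+s}$ has property $\mathbf{lts}(\mathcal{M}_\|)$ if every $p\in G$ has an open neighbourhood $\mathcal{N}_p$ invariant under translations by $\mathcal{M}_\|$ such that $G\cap\mathcal{N}_p\subset(a_+(p)+V_+)\cup(a_-(p)+V_-)$ for some $a_\pm(p)\in\mathbb{R}^{1+s}$ with $a_+(p)-a_-(p)\in V_+$. *)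

From HB Require Import structures.
From mathcomp Require Import all_boot all_order all_algebra.
From mathcomp Require Import all_classical all_reals all_analysis.
Set Implicit Arguments. Unset Strict Implicit. Unset Printing Implicit Defensive.
Import Order.TTheory GRing.Theory Num.Theory.
Import numFieldNormedType.Exports.
Local Open Scope classical_set_scope.
Local Open Scope ring_scope.

(* Minkowski space R^{1+s} is 'rV[R]_(s.+1); coordinate 0 is time. *)
Definition mink (R : realType) (s : nat) (x y : 'rV[R]_(s.+1)) : R :=
  x ord0 ord0 * y ord0 ord0
  - \sum_(i < s) x ord0 (lift ord0 i) * y ord0 (lift ord0 i).

Definition Vplus (R : realType) (s : nat) : set 'rV[R]_(s.+1) :=
  [set x | 0 < mink x x /\ 0 < x ord0 ord0].
Definition Vminus (R : realType) (s : nat) : set 'rV[R]_(s.+1) :=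
  [set x | 0 < mink x x /\ x ord0 ord0 < 0].

Definition translate (R : realType) (s : nat) (a : 'rV[R]_(s.+1))
  (S : set 'rV[R]_(s.+1)) : set 'rV[R]_(s.+1) :=
  [set x | exists2 y, S y & x = a + y].

Definition setsum (R : realType) (s : nat) (A B : set 'rV[R]_(s.+1))
  : set 'rV[R]_(s.+1) :=
  [set x | exists y, exists z, [/\ A y, B z & x = y + z]].

Definition timelike_plane (R : realType) (s : nat)
  (M : {vspace 'rV[R]_(s.+1)}) : Prop :=
  (\dim M = 2)%N /\ exists2 v, v \in M & 0 < mink v v.

Definition mperp (R : realType) (s : nat) (M : {vspace 'rV[R]_(s.+1)})
  : set 'rV[R]_(s.+1) :=
  [set y | forall x, x \in M -> mink x y = 0].

Definition lts (R : realType) (s : nat) (M : {vspace 'rV[R]_(s.+1)})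
  (G : set 'rV[R]_(s.+1)) : Prop :=
  forall p, G p ->
    exists N : set 'rV[R]_(s.+1),
      [/\ open N, N p,
          (forall x m, N x -> m \in M -> N (x + m)) &
          exists ap am : 'rV[R]_(s.+1),
            Vplus (ap - am) /\
            G `&` N `<=` translate ap (@Vplus R s) `|` translate am (@Vminus R s)].

From HB Require Import structures.
From mathcomp Require Import all_boot all_order all_algebra.
From mathcomp Require Import all_classical all_reals all_analysis.
From mathcomp Require Import ring lra.
Import Order.TTheory GRing.Theory Num.Theory.
Import numFieldNormedType.Exports.
Local Open Scope classical_set_scope.
Local Open Scope ring_scope.
Set Implicit Arguments. Unset Strict Implicit. Unset Printing Implicit Defensive.

(* Since [M] contains the timelike [u], Gram-Schmidt started from [u] yields a
   projection [q] onto the Minkowski-orthogonal complement of [M] along [M]: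
   every later vector is orthogonal to [u], hence spacelike or zero, so no
   division by a vanishing square occurs.
   Near [p] in [G] take [N = {x | - q(x-p).q(x-p) < u.u/16}], open and
   invariant under translations by [M].  For [x = a+ + k + z] in [N] with [k]
   in the closed forward cone and [z] orthogonal to [M], put
   [a+' = a+ - q a+ + q p - u/4]: then [x - a+' = (k - q k) + u/4 + q(x-p)],
   whose square exceeds [(k - q k).(k - q k) >= k.k >= 0] because [q k] is
   spacelike, and whose product with [u] is positive, so it is future timelike.
   Symmetrically [a-' = a- - q a- + q p + u/4] handles the backward cone, and
   [a+' - a-' = u/2] is future timelike. *)

Section MinkowskiForm.
Variables (R : realType) (s : nat).
Implicit Types (a : R) (x y z v e : 'rV[R]_(s.+1)).

Definition spatial_dot x y :=
  \sum_(i < s) x ord0 (lift ord0 i) * y ord0 (lift ord0 i).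

Lemma minkE x y : mink x y = x ord0 ord0 * y ord0 ord0 - spatial_dot x y.
Proof. by []. Qed.

Lemma minkC x y : mink x y = mink y x.
Proof.
rewrite !minkE mulrC; congr (_ - _).
by apply: eq_bigr => i _; rewrite mulrC.
Qed.

Lemma minkDl x y z : mink (x + y) z = mink x z + mink y z.
Proof.
rewrite !minkE /spatial_dot !mxE.
under eq_bigr do rewrite !mxE mulrDl.
rewrite big_split /=; ring.
Qed.

Lemma minkZl a x z : mink (a *: x) z = a * mink x z.
Proof.
rewrite !minkE /spatial_dot !mxE.
under eq_bigr do rewrite !mxE -mulrA.
rewrite -mulr_sumr; ring.
Qed.

Lemma mink0l z : mink 0 z = 0.
Proof. by rewrite -(scale0r 0) minkZl mul0r. Qed.

Lemma minkNl x z : mink (- x) z = - mink x z.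
Proof. by rewrite -scaleN1r minkZl mulN1r. Qed.

Lemma minkBl x y z : mink (x - y) z = mink x z - mink y z.
Proof. by rewrite minkDl minkNl. Qed.

Lemma mink_suml I (r : seq I) (P : pred I) (F : I -> 'rV[R]_(s.+1)) z :
  mink (\sum_(i <- r | P i) F i) z = \sum_(i <- r | P i) mink (F i) z.
Proof. exact: (big_morph (fun x => mink x z) (fun x y => minkDl x y z) (mink0l z)). Qed.

Lemma minkDr x y z : mink z (x + y) = mink z x + mink z y.
Proof. by rewrite !(minkC z) minkDl. Qed.

Lemma minkZr a x z : mink z (a *: x) = a * mink z x.
Proof. by rewrite !(minkC z) minkZl. Qed.

Lemma minkNr x z : mink z (- x) = - mink z x.
Proof. by rewrite !(minkC z) minkNl. Qed.

Lemma mink_sumr I (r : seq I) (P : pred I) (F : I -> 'rV[R]_(s.+1)) z :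
  mink z (\sum_(i <- r | P i) F i) = \sum_(i <- r | P i) mink z (F i).
Proof. by rewrite minkC mink_suml; under eq_bigr do rewrite minkC. Qed.

Lemma spatial_dot_ge0 x : 0 <= spatial_dot x x.
Proof. by apply: sumr_ge0 => i _; rewrite -expr2 sqr_ge0. Qed.

Lemma spatial_dot_eq0 x :
  x ord0 ord0 = 0 -> spatial_dot x x = 0 -> x = 0.
Proof.
move=> x0 /eqP; rewrite psumr_eq0 => [/allP xi0|i _]; last first.
  by rewrite -expr2 sqr_ge0.
apply/rowP => j; rewrite mxE; case: (unliftP ord0 j) => [i ->|->] //.
by apply/eqP; move: (xi0 i (mem_index_enum _)); rewrite mulf_eq0 orbb.
Qed.

(* Cauchy-Schwarz for the spatial parts, in a square-root-free form. *)
Lemma spatial_cauchy_schwarz x y :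
  2 * (x ord0 ord0 * y ord0 ord0) * spatial_dot x y <=
  y ord0 ord0 ^+ 2 * spatial_dot x x + x ord0 ord0 ^+ 2 * spatial_dot y y.
Proof.
set a := x ord0 ord0; set b := y ord0 ord0; rewrite -subr_ge0.
have sq_ge0 : 0 <= \sum_(i < s)
    (b * x ord0 (lift ord0 i) - a * y ord0 (lift ord0 i)) ^+ 2.
  by apply: sumr_ge0 => i _; rewrite sqr_ge0.
congr (_ <= _): sq_ge0.
by rewrite /spatial_dot !mulr_sumr -big_split -sumrB /=; apply: eq_bigr => i _; ring.
Qed.

Lemma mink_orth_timelike_eq0 e x :
  0 < mink e e -> mink x e = 0 -> 0 <= mink x x -> x = 0.
Proof.
rewrite !minkE => ee xe xx; have := spatial_cauchy_schwarz x e.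
have := spatial_dot_ge0 x; have := spatial_dot_ge0 e.
set x0 := x ord0 ord0 in xe xx *; set e0 := e ord0 ord0 in ee xe *.
set Sx := spatial_dot x x in xx *; set Se := spatial_dot e e in ee *.
rewrite (_ : spatial_dot x e = x0 * e0); last by lra.
move=> Se0 Sx0 cs; have x00 : x0 = 0.
  have e0_Se : 0 < e0 ^+ 2 - Se by nra.
  have : x0 ^+ 2 * (e0 ^+ 2 - Se) <= 0 by nra.
  by rewrite pmulr_lle0 // => x0_le0; apply/eqP; rewrite -sqrf_eq0 eq_le x0_le0 sqr_ge0.
by apply: spatial_dot_eq0 => //; rewrite -/Sx; move: xx; rewrite x00; lra.
Qed.

Lemma mink_orth_timelike_le0 e x :
  0 < mink e e -> mink x e = 0 -> mink x x <= 0.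
Proof.
move=> ee xe; rewrite leNgt; apply/negP => /[dup] xx.
move=> /ltW /(mink_orth_timelike_eq0 ee xe) x0.
by move: xx; rewrite x0 mink0l ltxx.
Qed.

Lemma mink_timelike_gt0 x y : 0 < mink x x -> 0 < mink y y ->
  0 < x ord0 ord0 * y ord0 ord0 -> 0 < mink x y.
Proof.
rewrite !minkE => xx yy xy; have := spatial_cauchy_schwarz x y.
have := spatial_dot_ge0 x; have := spatial_dot_ge0 y.
set x0 := x ord0 ord0 in xx xy *; set y0 := y ord0 ord0 in yy xy *.
set Sx := spatial_dot x x in xx *; set Sy := spatial_dot y y in yy *.
set Sxy := spatial_dot x y => Sy0 Sx0 cs.
have : 2 * (x0 * y0) * Sxy < 2 * (x0 * y0) ^+ 2 by nra.
nra.
Qed.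

Lemma mink_Vplus_gt0 x y : Vplus x -> Vplus y -> 0 < mink x y.
Proof. by move=> [xx x0] [yy y0]; apply: mink_timelike_gt0 => //; exact: mulr_gt0. Qed.

Lemma VplusN x : Vplus (- x) <-> Vminus x.
Proof. by rewrite /Vplus /Vminus /= minkNl minkNr opprK mxE oppr_gt0. Qed.

Lemma Vplus_timelike x e :
  0 < mink x x -> Vplus e -> 0 < mink x e -> Vplus x.
Proof.
move=> xx [ee e0] xe; split => //; have [x0|x0|x0] := ltgtP (x ord0 ord0) 0.
- have : 0 < mink (- x) e.
    by apply: mink_timelike_gt0; rewrite ?minkNl ?minkNr ?opprK // mxE; nra.
  by rewrite minkNl oppr_gt0 ltNge (ltW xe).
- by [].
- by move: xx; rewrite minkE x0 mul0r sub0r oppr_gt0 ltNge spatial_dot_ge0.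
Qed.

Lemma VplusZ a x :
  0 < a -> Vplus x -> Vplus (a *: x).
Proof.
move=> a0 [xx x0]; split; first by rewrite minkZl minkZr mulrA pmulr_rgt0 // mulr_gt0.
by rewrite mxE mulr_gt0.
Qed.

End MinkowskiForm.

Section Continuity.
Variables (R : realType) (s : nat).

Lemma mink_continuous (T : topologicalType) (f g : T -> 'rV[R]_(s.+1)) :
  continuous f -> continuous g -> continuous (fun t => mink (f t) (g t)).
Proof.
have coord_cont (h : T -> 'rV[R]_(s.+1)) j :
    continuous h -> continuous (fun t => h t ord0 j).
  move=> hc t.
  apply: (continuous_comp (f := h) (g := fun A : 'rV[R]_(s.+1) => A ord0 j)).
    exact: hc.
  exact: coord_continuous.
move=> fc gc t; rewrite /mink.
apply: (continuousB (f := fun t => f t ord0 ord0 * g t ord0 ord0)).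
  by apply: (continuousM (s := fun t => f t ord0 ord0)); exact: coord_cont.
apply: (continuous_big add_continuous) => i _ {}t.
by apply: (continuousM (s := fun t => f t ord0 (lift ord0 i))); exact: coord_cont.
Qed.

Lemma mink_continuousl u : continuous (fun x : 'rV[R]_(s.+1) => mink x u).
Proof.
apply: (mink_continuous (f := id)) => [x|]; [exact: cvg_id | exact: cst_continuous].
Qed.

Lemma mink_continuous_sqr : continuous (fun x : 'rV[R]_(s.+1) => mink x x).
Proof. by apply: (mink_continuous (f := id) (g := id)) => x; exact: cvg_id. Qed.

Lemma closure_ge0 (T : topologicalType) (h : T -> R) (S : set T) :
  continuous h -> (forall x, S x -> 0 <= h x) -> forall x, closure S x -> 0 <= h x.
Proof.
move=> hc Sh x; have cl : closed (h @^-1` [set r | 0 <= r]).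
  by apply: (proj1 (continuous_closedP h) hc); exact: closed_ge.
by move/(closureS Sh); rewrite -(proj1 (closure_id _) cl).
Qed.

Lemma closure_Vplus u k : Vplus u -> closure (@Vplus R s) k ->
  0 <= mink k k /\ 0 <= mink k u.
Proof.
move=> uV kV; split.
- apply: (closure_ge0 mink_continuous_sqr _ kV) => v [/ltW]//.
- apply: (closure_ge0 (mink_continuousl (u := u)) _ kV) => v vV.
  exact/ltW/mink_Vplus_gt0.
Qed.

Lemma closure_Vminus u k : Vplus u -> closure (@Vminus R s) k ->
  0 <= mink k k /\ mink k u <= 0.
Proof.
move=> uV kV; split.
- apply: (closure_ge0 mink_continuous_sqr _ kV) => v [/ltW]//.
- have minkNu_cont : continuous (fun k => - mink k u).
    by move=> t; apply: (continuousN (f := fun k => mink k u)); exact: mink_continuousl.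
  rewrite -oppr_ge0; apply: (closure_ge0 minkNu_cont _ kV) => v /VplusN vV.
  by rewrite -minkNl; exact/ltW/mink_Vplus_gt0.
Qed.

End Continuity.

Section GramSchmidt.
Variables (R : realType) (s : nat).
Implicit Types (x y f g : 'rV[R]_(s.+1)) (fs : seq 'rV[R]_(s.+1)).

Definition lightlike f := (f != 0) && (mink f f == 0).

Definition morthogonal fs := pairwise (fun f g => mink f g == 0) fs.

(* [mproj f x = 0] when [mink f f = 0], as [x / 0 = 0]. *)
Definition mproj f x := (mink x f / mink f f) *: f.

Definition perp_part fs x := x - \sum_(f <- fs) mproj f x.

Lemma mink_mproj_self f x : ~~ lightlike f -> mink (mproj f x) f = mink x f.
Proof.
rewrite /mproj minkZl negb_and negbK => /orP[/eqP-> | /divfK//].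
by rewrite mink0l mulr0 minkC mink0l.
Qed.

Lemma mink_perp_part fs x f : morthogonal fs -> ~~ has lightlike fs ->
  f \in fs -> mink (perp_part fs x) f = 0.
Proof.
rewrite /perp_part minkBl mink_suml => fs_orth fs_nl f_fs.
suff -> : \sum_(g <- fs) mink (mproj g x) f = mink x f by rewrite subrr.
elim: fs fs_orth fs_nl f_fs => // g fs IH.
rewrite /morthogonal pairwise_cons big_cons inE /=.
move=> /andP[/allP g_fs fs_orth] /norP[g_nl fs_nl] f_gfs.
have [f_fs|f_fs] := boolP (f \in fs).
  by rewrite /mproj minkZl (eqP (g_fs f f_fs)) mulr0 add0r IH.
move: f_gfs; rewrite (negbTE f_fs) orbF => /eqP ->.
rewrite mink_mproj_self // big1_seq ?addr0 // => h /andP[_ h_fs].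
by rewrite /mproj minkZl (minkC h) (eqP (g_fs h h_fs)) mulr0.
Qed.

Lemma mink_perp_part_span fs x y : morthogonal fs -> ~~ has lightlike fs ->
  y \in <<fs>>%VS -> mink (perp_part fs x) y = 0.
Proof.
move=> fs_orth fs_nl /(coord_span (X := in_tuple fs)) ->.
rewrite mink_sumr big1 // => i _.
by rewrite minkZr mink_perp_part ?mulr0 // mem_nth.
Qed.

Lemma perp_part_sub_span fs x : x - perp_part fs x \in <<fs>>%VS.
Proof.
rewrite /perp_part subKr big_seq; apply: memv_suml => f f_fs.
by rewrite memvZ // memv_span.
Qed.

Lemma perp_part_is_linear fs : linear (perp_part fs).
Proof.
move=> a x y; rewrite /perp_part.
under eq_bigr do rewrite /mproj minkDl minkZl mulrDl -mulrA scalerDl -scalerA.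
by rewrite big_split /= -scaler_sumr scalerBr opprD addrACA.
Qed.

HB.instance Definition _ fs :=
  GRing.isLinear.Build R _ _ *:%R (perp_part fs) (perp_part_is_linear fs).

Lemma perp_part_continuous fs : continuous (perp_part fs).
Proof.
move=> x; apply: (continuousB (f := id)); first exact: cvg_id.
apply: (continuous_big add_continuous) => f _ {}x.
apply: (continuousZ (s := fun x => mink x f / mink f f) (f := fun=> f)).
  apply: (continuousM (s := fun x => mink x f)); last exact: cst_continuous.
  exact: mink_continuousl.
exact: cst_continuous.
Qed.

Lemma exists_morthogonal_span (M : {vspace 'rV[R]_(s.+1)}) u :
  0 < mink u u -> u \in M ->
  exists fs, [/\ morthogonal fs, ~~ has lightlike fs, {subset fs <= M}
               & (M <= <<fs>>)%VS].
Proof.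
move=> uu uM.
suff /(_ (vbasis M) (fun b => @vbasis_mem _ _ b M)) [fs [_ ? ? ? basis_fs]] :
    forall bs : seq 'rV[R]_(s.+1), {subset bs <= M} -> exists fs,
    [/\ u \in fs, morthogonal fs, ~~ has lightlike fs, {subset fs <= M}
      & {subset bs <= <<fs>>%VS}].
  by exists fs; split => //; rewrite -(span_basis (vbasisP M)); exact/span_subvP.
elim=> [_|b bs IH bsM].
  exists [:: u]; split;
    rewrite ?mem_head //= ?andbT ?orbF ?negb_and ?(gt_eqF uu) ?orbT //.
  by move=> f; rewrite inE => /eqP->.
have [fs [u_fs fs_orth fs_nl fsM bs_fs]] :=
  IH (fun y yb => bsM y (mem_behead (s := b :: bs) yb)).
pose g := perp_part fs b.
have gu : mink g u = 0 := mink_perp_part b fs_orth fs_nl u_fs.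
exists (g :: fs); split.
- by rewrite inE u_fs orbT.
- rewrite /morthogonal pairwise_cons; apply/andP; split => //.
  by apply/allP => f f_fs; rewrite mink_perp_part.
- rewrite /= negb_or fs_nl andbT negb_and negbK.
  have [gg|_] := eqVneq (mink g g) 0; last by rewrite orbT.
  by rewrite (mink_orth_timelike_eq0 uu gu) ?gg ?eqxx.
- move=> f; rewrite inE => /orP[/eqP->|/fsM//].
  rewrite memvB ?(bsM b (mem_head _ _)) // big_seq; apply: memv_suml => h /fsM hM.
  by rewrite memvZ.
- have fs_gfs : (<<fs>> <= <<g :: fs>>)%VS.
    exact/sub_span/(mem_behead (s := g :: fs)).
  move=> y; rewrite inE => /orP[/eqP->|/bs_fs/(subvP fs_gfs)//].
  rewrite -(subrK g b) memvD ?(memv_span (mem_head g fs)) //.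
  by apply: (subvP fs_gfs); exact: perp_part_sub_span.
Qed.

Lemma exists_perp_projection (M : {vspace 'rV[R]_(s.+1)}) u :
  0 < mink u u -> u \in M ->
  exists q : {linear 'rV[R]_(s.+1) -> 'rV[R]_(s.+1)},
    [/\ continuous q, forall x, mperp M (q x) & forall x, x - q x \in M].
Proof.
move=> uu uM; have [fs [fs_orth fs_nl fsM Mfs]] := exists_morthogonal_span uu uM.
exists (perp_part fs); split.
- exact: perp_part_continuous.
- move=> x m mM; rewrite minkC; apply: mink_perp_part_span => //.
  exact: (subvP Mfs).
- by move=> x; apply: (subvP (introT span_subvP fsM)); exact: perp_part_sub_span.
Qed.

End GramSchmidt.

Section PerpNeighbourhood.
Variables (R : realType) (s : nat) (M : {vspace 'rV[R]_(s.+1)}).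
Variables (u : 'rV[R]_(s.+1)) (q : {linear 'rV[R]_(s.+1) -> 'rV[R]_(s.+1)}).
Hypotheses (uM : u \in M) (uV : Vplus u) (q_cont : continuous q)
  (q_perp : forall x, mperp M (q x)) (q_par : forall x, x - q x \in M).
Implicit Types (x y z k p w : 'rV[R]_(s.+1)).

Let u_timelike : 0 < mink u u. Proof. by case: uV. Qed.

Lemma mperp_eq0 x : x \in M -> mperp M x -> x = 0.
Proof.
move=> xM xp; apply: (mink_orth_timelike_eq0 u_timelike); first by rewrite minkC xp.
by rewrite xp.
Qed.

Lemma q_eq0 m : m \in M -> q m = 0.
Proof. by move=> mM; apply: mperp_eq0 => //; rewrite -[q m](subKr m) memvB ?q_par. Qed.

Lemma q_id w : mperp M w -> q w = w.
Proof.
move=> wp; apply/eqP; rewrite -subr_eq0 -oppr_eq0 opprB.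
apply/eqP/mperp_eq0 => [|m mM]; first exact: q_par.
by rewrite minkDr minkNr wp // q_perp // subr0.
Qed.

Lemma Vplus_perp_shift k w : 0 <= mink k k -> 0 <= mink k u -> mperp M w ->
  - mink w w < mink u u / 16 -> Vplus (k - q k + 4^-1 *: u + w).
Proof.
move=> kk ku wp ww.
have qk_u : mink (q k) u = 0 by rewrite minkC q_perp.
have qkqk : mink (q k) (q k) <= 0 := mink_orth_timelike_le0 u_timelike qk_u.
have kP : k = (k - q k) + q k by rewrite subrK.
have := q_perp k (q_par k); have := q_par k.
move: (k - q k) kP => P kP PM qk_P.
have PP : mink k k = mink P P + mink (q k) (q k).
  by rewrite {1 2}kP minkDl !minkDr (minkC (q k) P) qk_P; lra.
have Pu : mink k u = mink P u by rewrite {1}kP minkDl qk_u addr0.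
have P_w := wp P PM; have u_w := wp u uM.
have uu := u_timelike; apply: (Vplus_timelike _ uV);
  rewrite !minkDl ?minkDr !minkZl ?minkZr ?(minkC u P) ?(minkC w P) ?(minkC w u)
    ?P_w ?u_w.
all: lra.
Qed.

Definition perp_nbhd p :=
  [set x | - mink (q (x - p)) (q (x - p)) < mink u u / 16].

Lemma open_perp_nbhd p : open (perp_nbhd p).
Proof.
pose F x := - mink (q (x - p)) (q (x - p)).
have qc : continuous (fun x => q (x - p)).
  move=> y; apply: (continuous_comp (f := fun x => x - p)); last exact: q_cont.
  by apply: (continuousB (f := id)); [exact: cvg_id | exact: cst_continuous].
have Fc : continuous F.
  move=> x; apply: (continuousN (f := fun x => mink (q (x - p)) (q (x - p)))).
  exact: mink_continuous.
exact: (proj1 (continuousP F) Fc _ (@open_lt _ (mink u u / 16))).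
Qed.

Lemma perp_nbhd_center p : perp_nbhd p p.
Proof. by rewrite /perp_nbhd /= subrr (linear0 q) mink0l oppr0 divr_gt0. Qed.

Lemma perp_nbhdD p x m : m \in M -> perp_nbhd p x -> perp_nbhd p (x + m).
Proof.
by move=> mM; rewrite /perp_nbhd /= (addrAC x m) (linearD q (x - p)) (q_eq0 mM) addr0.
Qed.

Lemma perp_nbhd_future ap p k z : closure (@Vplus R s) k -> mperp M z ->
  perp_nbhd p (ap + k + z) ->
  translate (ap - q ap + q p - 4^-1 *: u) (@Vplus R s) (ap + k + z).
Proof.
move=> kV zp xN; have [kk ku] := closure_Vplus uV kV.
exists (k - q k + 4^-1 *: u + q (ap + k + z - p)).
  exact: Vplus_perp_shift.
rewrite (linearB q) !(linearD q) (q_id zp).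
move: (q ap) (q k) (q p) => qa qk qp; apply/rowP => j; rewrite !mxE; lra.
Qed.

Lemma perp_nbhd_past am p k z : closure (@Vminus R s) k -> mperp M z ->
  perp_nbhd p (am + k + z) ->
  translate (am - q am + q p + 4^-1 *: u) (@Vminus R s) (am + k + z).
Proof.
move=> kV zp xN; have [kk ku] := closure_Vminus uV kV.
exists (k - q k - 4^-1 *: u + q (am + k + z - p)).
  apply/VplusN.
  have -> : - (k - q k - 4^-1 *: u + q (am + k + z - p)) =
      - k - q (- k) + 4^-1 *: u + q (- (am + k + z - p)).
    rewrite !(linearN q); move: (q k) (q _) => qk qx.
    by apply/rowP => j; rewrite !mxE; lra.
  apply: Vplus_perp_shift; rewrite ?minkNl ?minkNr ?opprK ?oppr_ge0 //.
  by rewrite (linearN q) minkNl minkNr opprK.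
rewrite (linearB q) !(linearD q) (q_id zp).
move: (q am) (q k) (q p) => qa qk qp; apply/rowP => j; rewrite !mxE; lra.
Qed.

Lemma lts_perp_cones ap am w : mperp M w -> ap - am = u + w ->
  lts M (setsum (translate ap (closure (@Vplus R s))
                 `|` translate am (closure (@Vminus R s))) (mperp M)).
Proof.
move=> wp apam p _; exists (perp_nbhd p); split.
- exact: open_perp_nbhd.
- exact: perp_nbhd_center.
- by move=> x m xN mM; exact: perp_nbhdD.
exists (ap - q ap + q p - 4^-1 *: u), (am - q am + q p + 4^-1 *: u); split.
  have qw : q ap - q am = w.
    by rewrite -(linearB q) apam (linearD q) (q_eq0 uM) add0r q_id.
  suff -> : ap - q ap + q p - 4^-1 *: u - (am - q am + q p + 4^-1 *: u) = 2^-1 *: u.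
    by apply: VplusZ.
  move: qw apam; move: (q ap) (q am) (q p) => qa qm qp qw apam.
  apply/rowP => j; move/rowP: qw => /(_ j); move/rowP: apam => /(_ j).
  by rewrite !mxE; lra.
move=> x [[y [z [[[k kV ->]|[k kV ->]] zp ->]]] xN].
- by left; exact: perp_nbhd_future.
- by right; exact: perp_nbhd_past.
Qed.

End PerpNeighbourhood.

Theorem lemmaD7 (R : realType) (s : nat) (M : {vspace 'rV[R]_(s.+1)})
  (ap am : 'rV[R]_(s.+1)) :
  timelike_plane M ->
  (exists u w, [/\ u \in M, mperp M w, ap - am = u + w & Vplus u]) ->
  lts M (setsum (translate ap (closure (@Vplus R s))
                 `|` translate am (closure (@Vminus R s)))
                (mperp M)).
Proof.
move=> _ [u [w [uM wp apam uV]]].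
have [q [q_cont q_perp q_par]] := exists_perp_projection (proj1 uV) uM.
exact: (lts_perp_cones uM uV q_cont q_perp q_par wp apam).
Qed.
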